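(* For a standard finitary set functor $H\colon\mathbf{Set}\to\mathbf{Set}$ the following are equivalent: (1) $H$ is a cia functor; (2) $H\cong H_0(-)+Y$ for some set functor $H_0$ preserving countable coproducts and some set $Y$; (3) $H\cong W\times(-)+Y$ for some sets $W$ and $Y$.
   Context: A set functor $H$ is finitary if for every set $X$, $HX=\bigcup HY$ over finite subsets $Y\subseteq X$; standard if it preserves inclusions ($X\subseteq Y$ implies $HX\subseteq HY$, with $H$ of the inclusion map the inclusion map) and finite intersections. An $H$-algebra $a\colon HA\to A$ is corecursive if for every coalgebra $e\colon X\to HX$ there is a unique $s\colon X\to A$ with $s=a\cdot Hs\cdot e$; it is a cia if for every $e\colon X\to HX+A$ there is a unique $s$ with $s=[a,\mathrm{id}_A]\cdot(Hs+\mathrm{id}_A)\cdot e$. A cia functor is a functor for which every corecursive algebra is a cia. $\cong$ denotes natural isomorphism. *)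

From Stdlib Require Import List.

Record SetFunctor := {
  Fobj :> Type -> Type;
  Fmap : forall X Y : Type, (X -> Y) -> Fobj X -> Fobj Y;
  Fmap_id : forall (X : Type) (u : Fobj X), Fmap X X (fun x => x) u = u;
  Fmap_comp : forall (X Y Z : Type) (f : X -> Y) (g : Y -> Z) (u : Fobj X),
      Fmap X Z (fun x => g (f x)) u = Fmap Y Z g (Fmap X Y f u)
}.

Arguments Fmap _ {X Y} _ _.

Definition nat_iso (H K : SetFunctor) : Prop :=
  exists (phi : forall X, H X -> K X) (psi : forall X, K X -> H X),
    (forall X u, psi X (phi X u) = u) /\
    (forall X v, phi X (psi X v) = v) /\
    (forall X Y (f : X -> Y) u, phi Y (Fmap H f u) = Fmap K f (phi X u)).

Definition injective {A B} (f : A -> B) : Prop := forall x y, f x = f y -> x = y.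
Definition bijective {A B} (f : A -> B) : Prop :=
  injective f /\ forall y, exists x, f x = y.

Definition finitary (H : SetFunctor) : Prop :=
  forall (X : Type) (u : H X), exists (l : list X) (v : H {x : X | In x l}),
    Fmap H (@proj1_sig X (fun x => In x l)) v = u.

(* Standard: preserves inclusions (rendered as: maps injections to injections)
   and finite intersections (the image of the intersection is the intersection
   of the images). *)
Definition standard (H : SetFunctor) : Prop :=
  (forall (X Y : Type) (m : X -> Y), injective m -> injective (Fmap H m)) /\
  (forall (X : Type) (P Q : X -> Prop) (a : H {x | P x}) (b : H {x | Q x}),
      Fmap H (@proj1_sig X P) a = Fmap H (@proj1_sig X Q) b ->
      exists c : H {x | P x /\ Q x},
        Fmap H (fun z : {x | P x /\ Q x} =>
                  exist P (proj1_sig z) (proj1 (proj2_sig z))) c = a /\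
        Fmap H (fun z : {x | P x /\ Q x} =>
                  exist Q (proj1_sig z) (proj2 (proj2_sig z))) c = b).

Definition preserves_countable_coproducts (H : SetFunctor) : Prop :=
  forall (I : Type) (X : I -> Type), (exists f : I -> nat, injective f) ->
    bijective (fun p : {i : I & H (X i)} =>
                 Fmap H (existT X (projT1 p)) (projT2 p) : H {i : I & X i}).

Definition unique_fun {X A : Type} (P : (X -> A) -> Prop) : Prop :=
  exists s, P s /\ forall s', P s' -> forall x, s' x = s x.

Definition corecursive (H : SetFunctor) (A : Type) (a : H A -> A) : Prop :=
  forall (X : Type) (e : X -> H X),
    unique_fun (fun s : X -> A => forall x, s x = a (Fmap H s (e x))).

Definition cia (H : SetFunctor) (A : Type) (a : H A -> A) : Prop :=
  forall (X : Type) (e : X -> H X + A),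
    unique_fun (fun s : X -> A => forall x,
      s x = match e x with inl u => a (Fmap H s u) | inr y => y end).

Definition cia_functor (H : SetFunctor) : Prop :=
  forall (A : Type) (a : H A -> A), corecursive H A a -> cia H A a.

Definition sum_const_functor (H0 : SetFunctor) (Y : Type) : SetFunctor.
Proof.
  refine {| Fobj := fun X => (H0 X + Y)%type;
            Fmap := fun X Z f u => match u with
                                   | inl h => inl (Fmap H0 f h)
                                   | inr y => inr y end |}.
  - intros X [h|y]; [now rewrite Fmap_id | reflexivity].
  - intros X Z V f g [h|y]; [now rewrite Fmap_comp | reflexivity].
Defined.

Definition lin_functor (W Y : Type) : SetFunctor.
Proof.
  refine {| Fobj := fun X => ((W * X) + Y)%type;
            Fmap := fun X Z f u => match u with
                                   | inl (w, x) => inl (w, f x)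
                                   | inr y => inr y end |}.
  - intros X [[w x]|y]; reflexivity.
  - intros X Z V f g [[w x]|y]; reflexivity.
Defined.

(* A standard finitary functor is of the form [W * - + Y] exactly when it satisfies a
   dichotomy: every [u : H X] lies in [H (X - {x0})] or in [H {x0}].  Given the
   dichotomy, finitarity shrinks the support of any [u] to at most one point, so [u]
   comes from [Y := H 0] or is the image of some [w : H 1] (not coming from [H 0])
   under a constant map.  Preservation of the coproduct [{x0} + (X - {x0})] yields
   the dichotomy, and so does being a cia functor: a "rank" algebra on
   [option (nat * X)] is corecursive, yet a violation of the dichotomy would give a
   cia equation for it whose injective solution contradicts the violation.
   Finally [W * - + Y] is a cia functor since along a path of the equation either
   the algebra is reached after finitely many steps, fixing the value, or the path
   stays in a coalgebra for which corecursiveness applies. *)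
From Stdlib Require Import List Classical ClassicalEpsilon FunctionalExtensionality ProofIrrelevance Lia.

Lemma Fmap_ext (H : SetFunctor) X Y (f g : X -> Y) u :
  (forall x, f x = g x) -> Fmap H f u = Fmap H g u.
Proof. intros E. now rewrite (functional_extensionality f g E). Qed.

Lemma sig_eq {T} {P : T -> Prop} (a b : {x | P x}) : proj1_sig a = proj1_sig b -> a = b.
Proof. apply eq_sig_hprop. intros; apply proof_irrelevance. Qed.

Definition lies_in (H : SetFunctor) {X} (P : X -> Prop) (u : H X) : Prop :=
  exists v : H {x | P x}, Fmap H (@proj1_sig X P) v = u.

Lemma lies_in_Fmap H X Z (P : Z -> Prop) (f : X -> Z) u :
  (forall x, P (f x)) -> lies_in H P (Fmap H f u).
Proof.
  intros HP. exists (Fmap H (fun x => exist P (f x) (HP x)) u). now rewrite <- Fmap_comp.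
Qed.

Lemma lies_in_mono H X (P Q : X -> Prop) u :
  (forall x, P x -> Q x) -> lies_in H P u -> lies_in H Q u.
Proof. intros HPQ [v <-]. apply lies_in_Fmap. intros [x Px]. auto. Qed.

Lemma lies_in_inter H X (P Q : X -> Prop) u : standard H ->
  lies_in H P u -> lies_in H Q u -> lies_in H (fun x => P x /\ Q x) u.
Proof.
  intros [_ Hint] [a Ha] [b Hb].
  destruct (Hint X P Q a b) as [c [Hc1 _]]; [congruence|].
  exists c. rewrite <- Ha, <- Hc1, <- Fmap_comp. reflexivity.
Qed.

(* Intersect with the image of [s], using that [H] preserves intersections. *)
Lemma lies_in_preimage H X Z (s : X -> Z) (P : Z -> Prop) u : standard H -> injective s ->
  lies_in H P (Fmap H s u) -> lies_in H (fun x => P (s x)) u.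
Proof.
  intros [Hinj Hint] sinj [g Hg].
  set (Q := fun z => exists x, s x = z).
  set (s' := fun x => exist Q (s x) (ex_intro _ x eq_refl)).
  assert (E : Fmap H (@proj1_sig Z Q) (Fmap H s' u) = Fmap H s u)
    by (rewrite <- Fmap_comp; reflexivity).
  destruct (Hint _ P Q g (Fmap H s' u)) as [c [_ Hc2]]; [congruence|].
  assert (r : forall z : {z | P z /\ Q z}, {x | P (s x) /\ s x = proj1_sig z}).
  { intros [z [Pz Qz]]. destruct (constructive_indefinite_description _ Qz) as [x <-].
    exists x. auto. }
  exists (Fmap H (fun z => exist (fun x => P (s x)) (proj1_sig (r z)) (proj1 (proj2_sig (r z)))) c).
  apply (Hinj _ _ s').
  { intros x y Hxy. apply sinj. exact (f_equal (@proj1_sig _ _) Hxy). }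
  rewrite <- !Fmap_comp, <- Hc2. apply Fmap_ext. intros z.
  apply sig_eq. exact (proj2 (proj2_sig (r z))).
Qed.

Definition dichotomy (H : SetFunctor) : Prop :=
  forall X (u : H X) (x0 : X),
    lies_in H (fun x => x <> x0) u \/ lies_in H (fun x => x = x0) u.
Section RankAlgebra.
Variables (H : SetFunctor) (V : Type).

Definition rank_neq (M : nat) (b : option (nat * V)) : Prop :=
  match b with None => True | Some (m, _) => m <> M end.

Definition rank_le (M : nat) (b : option (nat * V)) : Prop :=
  match b with None => True | Some (m, _) => m <= M end.

Definition top_rank (M : nat) (h : H (option (nat * V))) : Prop :=
  lies_in H (rank_le M) h /\ ~ lies_in H (rank_neq M) h.

(* [None] carries no rank; an element whose ranks have a maximum [M] is sent to
   rank [S M].  Any solution of a coalgebra would thus strictly decrease ranks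
   along the coalgebra, so [None] is the only one. *)
Definition rank_alg (v0 : V) (h : H (option (nat * V))) : option (nat * V) :=
  match excluded_middle_informative (exists M, top_rank M h) with
  | left p => Some (S (proj1_sig (constructive_indefinite_description _ p)), v0)
  | right _ => None
  end.

Lemma rank_alg_cases v0 h :
  (rank_alg v0 h = None /\ ~ exists M, top_rank M h) \/
  exists M, rank_alg v0 h = Some (S M, v0) /\ top_rank M h.
Proof.
  unfold rank_alg. destruct excluded_middle_informative as [p|np]; [right|left; auto].
  destruct constructive_indefinite_description as [M HM]. exists M. auto.
Qed.

Lemma rank_alg_corecursive v0 : corecursive H _ (rank_alg v0).
Proof.
  intros X e. exists (fun _ => None). split.
  - intros x. destruct (rank_alg_cases v0 (Fmap H (fun _ => None) (e x)))
      as [[-> _]|[M [_ [_ Hn]]]]; [reflexivity|].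
    exfalso. apply Hn, lies_in_Fmap. exact (fun _ => I).
  - intros s Hs.
    assert (no_rank : forall n m, m < n -> forall x v, s x <> Some (m, v)).
    { induction n as [|n IH]; intros m Hm x v Hx; [lia|].
      rewrite Hs in Hx.
      destruct (rank_alg_cases v0 (Fmap H s (e x))) as [[Hn _]|[M [HM [_ HnE]]]];
        rewrite ?Hn, ?HM in Hx; [discriminate|].
      injection Hx as Hrank _. subst m.
      apply HnE, lies_in_Fmap. intros y.
      destruct (s y) as [[k w]|] eqn:E; [|exact I].
      intros ->. exact (IH M ltac:(lia) y w E). }
    intros x. destruct (s x) as [[k w]|] eqn:E; [|reflexivity].
    exfalso. exact (no_rank (S k) k ltac:(lia) x w E).
Qed.

End RankAlgebra.

(* Solve [s v = Some (0, v)] for [v <> v1] and [s v1 = rank_alg v1 (Fmap s u)]: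
   [s] is injective, and whichever rank [Fmap s u] receives, pulling back along
   [s] puts [u] into [H (V - {v1})] or [H {v1}]. *)
Lemma cia_dichotomy H : standard H -> cia_functor H -> dichotomy H.
Proof.
  intros Hst Hcia V u v1.
  destruct (classic (lies_in H (fun x => x <> v1) u)) as [h1|n1]; [left; exact h1|].
  destruct (classic (lies_in H (fun x => x = v1) u)) as [h2|n2]; [right; exact h2|].
  exfalso.
  set (e := fun v : V => match excluded_middle_informative (v = v1) with
                        | left _ => @inl (H V) (option (nat * V)) u
                        | right _ => inr (Some (0, v)) end).
  destruct (Hcia _ _ (rank_alg_corecursive H V v1) V e) as [s [Hs _]].
  assert (s_other : forall v, v <> v1 -> s v = Some (0, v)).
  { intros v nv. rewrite Hs. unfold e. now destruct excluded_middle_informative. }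
  assert (s_v1 : s v1 = rank_alg H V v1 (Fmap H s u)).
  { rewrite Hs. unfold e. now destruct excluded_middle_informative. }
  assert (s_v1_pos : forall w, s v1 <> Some (0, w)).
  { intros w. rewrite s_v1.
    destruct (rank_alg_cases H V v1 (Fmap H s u)) as [[-> _]|[M [-> _]]]; congruence. }
  assert (s_inj : injective s).
  { intros a b Hab.
    destruct (classic (a = v1)) as [->|na]; destruct (classic (b = v1)) as [->|nb]; auto.
    - rewrite (s_other b nb) in Hab. now destruct (s_v1_pos b).
    - rewrite (s_other a na) in Hab. now destruct (s_v1_pos a).
    - rewrite (s_other a na), (s_other b nb) in Hab. congruence. }
  destruct (rank_alg_cases H V v1 (Fmap H s u)) as [[HN Hn]|[M [HM [HF HnE]]]].
  - apply Hn. exists 0. split.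
    + apply lies_in_Fmap. intros v. destruct (classic (v = v1)) as [->|nv].
      * now rewrite s_v1, HN.
      * rewrite (s_other v nv). simpl. lia.
    + intros HE. apply n2. apply lies_in_preimage in HE; auto. revert HE.
      apply lies_in_mono. intros v Hv. apply NNPP. intros nv.
      rewrite (s_other v nv) in Hv. auto.
  - destruct M as [|M].
    + apply n1. apply lies_in_preimage in HF; auto. revert HF. apply lies_in_mono.
      intros v Hv ->. rewrite s_v1, HM in Hv. simpl in Hv. lia.
    + apply HnE, lies_in_Fmap. intros v. destruct (classic (v = v1)) as [->|nv].
      * rewrite s_v1, HM. simpl. lia.
      * rewrite (s_other v nv). simpl. lia.
Qed.

Lemma nat_iso_of_natural_bijection (H K : SetFunctor) (psi : forall X, K X -> H X) :
  (forall X, injective (psi X)) -> (forall X u, exists v, psi X v = u) ->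
  (forall X Y (f : X -> Y) v, psi Y (Fmap K f v) = Fmap H f (psi X v)) ->
  nat_iso H K.
Proof.
  intros Hi Hs Hn.
  set (phi := fun X u => proj1_sig (constructive_indefinite_description _ (Hs X u))).
  assert (psi_phi : forall X u, psi X (phi X u) = u).
  { intros X u. unfold phi. now destruct constructive_indefinite_description. }
  exists phi, psi. split; [exact psi_phi|]. split.
  - intros X v. apply Hi, psi_phi.
  - intros X Y f u. apply Hi. now rewrite psi_phi, Hn, psi_phi.
Qed.

Definition from_empty X (y : Empty_set) : X := match y with end.

Section LinearForm.
Variable H : SetFunctor.
Hypotheses (Hst : standard H) (Hfin : finitary H) (Hd : dichotomy H).

Lemma lies_in_list_cases X (l : list X) (u : H X) : lies_in H (fun x => In x l) u ->
  lies_in H (fun _ => False) u \/ exists x0, lies_in H (fun x => x = x0) u.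
Proof.
  revert u; induction l as [|x0 l IH]; intros u Hu.
  - left. exact Hu.
  - destruct (Hd X u x0) as [Hne|Heq]; [|right; eauto].
    apply IH. apply (lies_in_mono _ _ (fun x => x <> x0 /\ In x (x0 :: l))).
    + intros x [Hx [<-|Hl]]; [contradiction|exact Hl].
    + apply lies_in_inter; auto.
Qed.

Lemma lies_in_False_from_empty X (u : H X) :
  lies_in H (fun _ => False) u -> exists y : H Empty_set, Fmap H (from_empty X) y = u.
Proof.
  intros [v <-]. exists (Fmap H (fun z => False_rect Empty_set (proj2_sig z)) v).
  rewrite <- Fmap_comp. apply Fmap_ext. intros [x []].
Qed.

Lemma Fmap_const_injective X (x : X) : injective (Fmap H (fun _ : unit => x)).
Proof. apply (proj1 Hst). intros [] [] _. reflexivity. Qed.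

Lemma lies_in_False_const X (x : X) (w : H unit) :
  lies_in H (fun _ => False) (Fmap H (fun _ => x) w) -> lies_in H (fun _ => False) w.
Proof.
  intros Hw. apply lies_in_preimage in Hw; auto. intros [] [] _. reflexivity.
Qed.

Lemma constant_or_const_map X (u : H X) :
  lies_in H (fun _ => False) u \/ exists x0 (w : H unit), Fmap H (fun _ => x0) w = u.
Proof.
  destruct (Hfin X u) as [l Hl].
  destruct (lies_in_list_cases X l u Hl) as [HF|[x0 [v <-]]]; [left; exact HF|].
  right. exists x0, (Fmap H (fun _ => tt) v). rewrite <- Fmap_comp.
  apply Fmap_ext. intros [x ->]. reflexivity.
Qed.

Definition HW := {w : H unit | ~ lies_in H (fun _ => False) w}.
Definition HY := H Empty_set.

Definition to_H X (v : lin_functor HW HY X) : H X :=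
  match v with
  | inl (w, x) => Fmap H (fun _ => x) (proj1_sig w)
  | inr y => Fmap H (from_empty X) y
  end.

Lemma to_H_injective X : injective (to_H X).
Proof.
  assert (HF : forall (w : HW) (x : X) (y : HY),
             Fmap H (fun _ => x) (proj1_sig w) <> Fmap H (from_empty X) y).
  { intros w x y E. apply (proj2_sig w), (lies_in_False_const X x).
    rewrite E. apply lies_in_Fmap. intros []. }
  intros [[w x]|y] [[w' x']|y']; simpl; intros E.
  - destruct (classic (x = x')) as [<-|nx].
    + apply Fmap_const_injective, sig_eq in E. now subst.
    + exfalso. apply (proj2_sig w), (lies_in_False_const X x).
      apply (lies_in_mono _ _ (fun z => z = x /\ z = x')); [intros z [-> ?]; auto|].
      apply lies_in_inter; auto; [|rewrite E]; apply lies_in_Fmap; reflexivity.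
  - now destruct (HF w x y').
  - now destruct (HF w' x' y).
  - f_equal. apply (proj1 Hst _ _ (from_empty X)); [intros []|exact E].
Qed.

Lemma to_H_surjective X (u : H X) : exists v, to_H X v = u.
Proof.
  destruct (classic (lies_in H (fun _ => False) u)) as [HF|nF].
  - destruct (lies_in_False_from_empty X u HF) as [y Hy]. now exists (inr y).
  - destruct (constant_or_const_map X u) as [HF|[x0 [w Hw]]]; [contradiction|].
    assert (nw : ~ lies_in H (fun _ => False) w).
    { intros [v <-]. apply nF. rewrite <- Hw, <- Fmap_comp. apply lies_in_Fmap. intros [_ []]. }
    now exists (inl (exist _ w nw, x0)).
Qed.

Lemma to_H_natural X Z (f : X -> Z) v : to_H Z (Fmap (lin_functor HW HY) f v) = Fmap H f (to_H X v).
Proof.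
  destruct v as [[w x]|y]; simpl; rewrite <- Fmap_comp; [reflexivity|].
  apply Fmap_ext. intros [].
Qed.

Lemma linear_form : nat_iso H (lin_functor HW HY).
Proof.
  apply (nat_iso_of_natural_bijection H _ to_H).
  - exact to_H_injective.
  - exact to_H_surjective.
  - exact to_H_natural.
Qed.

End LinearForm.

Lemma linear_of_dichotomy H : standard H -> finitary H -> dichotomy H ->
  exists W Y : Type, nat_iso H (lin_functor W Y).
Proof. intros. exists (HW H), (HY H). now apply linear_form. Qed.

Section LinearCia.
Variables (W Y A X : Type) (a : W * A + Y -> A) (e : X -> (W * X + Y) + A).

Let L := lin_functor W Y.

Fixpoint approx (n : nat) (x : X) : option A :=
  match e x with
  | inr b => Some b
  | inl (inr _) => None
  | inl (inl (w, x')) =>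
      match n with
      | 0 => None
      | S m => option_map (fun b => a (inl (w, b))) (approx m x')
      end
  end.

Lemma approx_S n x b : approx n x = Some b -> approx (S n) x = Some b.
Proof.
  revert x b; induction n as [|n IH]; intros x b Hn; simpl in *;
    destruct (e x) as [[[w x']|y]|b'] eqn:E; auto; try discriminate.
  destruct (approx n x') eqn:E'; simpl in Hn; [|discriminate].
  now rewrite (IH _ _ E').
Qed.

Lemma approx_le n m x b : n <= m -> approx n x = Some b -> approx m x = Some b.
Proof. induction 1; auto using approx_S. Qed.

Lemma approx_functional n m x b b' : approx n x = Some b -> approx m x = Some b' -> b = b'.
Proof.
  intros Hn Hm.
  apply (approx_le n (max n m)) in Hn; [|lia]. apply (approx_le m (max n m)) in Hm; [|lia].
  congruence.
Qed.

Definition settled x := exists b n, approx n x = Some b.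

Lemma settled_step x w x' : e x = inl (inl (w, x')) -> settled x <-> settled x'.
Proof.
  intros E; split.
  - intros [b [[|n] Hn]]; simpl in Hn; rewrite E in Hn; [discriminate|].
    destruct (approx n x') as [b'|] eqn:E'; [now exists b', n|discriminate].
  - intros [b [n Hn]]. exists (a (inl (w, b))), (S n). simpl. now rewrite E, Hn.
Qed.

Definition unsettled := {x | ~ settled x}.

Lemma unsettled_step (z : unsettled) :
  exists r : L unsettled, e (proj1_sig z) = inl (Fmap L (@proj1_sig _ _) r).
Proof.
  destruct z as [x ng]; simpl. destruct (e x) as [[[w x']|y]|b] eqn:E.
  - assert (ng' : ~ settled x') by (now rewrite <- (settled_step x w x' E)).
    now exists (inl (w, exist _ x' ng')).
  - now exists (inr y).
  - exfalso. apply ng. exists b, 0. simpl. now rewrite E.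
Qed.

Definition unsettled_coalg (z : unsettled) : L unsettled :=
  proj1_sig (constructive_indefinite_description _ (unsettled_step z)).

Lemma unsettled_coalg_spec z :
  e (proj1_sig z) = inl (Fmap L (@proj1_sig _ _) (unsettled_coalg z)).
Proof. unfold unsettled_coalg. now destruct constructive_indefinite_description. Qed.

Variable t : unsettled -> A.
Hypothesis Ht : forall z, t z = a (Fmap L t (unsettled_coalg z)).
Hypothesis Ht_unique :
  forall t', (forall z, t' z = a (Fmap L t' (unsettled_coalg z))) -> forall z, t' z = t z.

Definition glue (x : X) : A :=
  match excluded_middle_informative (settled x) with
  | left g => proj1_sig (constructive_indefinite_description _ g)
  | right ng => t (exist _ x ng)
  end.

Lemma glue_settled x n b : approx n x = Some b -> glue x = b.
Proof.
  intros Hn. unfold glue. destruct excluded_middle_informative as [g|ng].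
  - destruct constructive_indefinite_description as [b' [n' Hn']].
    exact (approx_functional _ _ _ _ _ Hn' Hn).
  - exfalso. apply ng. now exists b, n.
Qed.

Lemma glue_unsettled z : glue (proj1_sig z) = t z.
Proof.
  destruct z as [x ng]. unfold glue. simpl.
  destruct excluded_middle_informative; [contradiction|]. f_equal. now apply sig_eq.
Qed.

Lemma glue_solves x :
  glue x = match e x with inl u => a (Fmap L glue u) | inr b => b end.
Proof.
  destruct (classic (settled x)) as [[b [n Hn]]|ng].
  - rewrite (glue_settled _ _ _ Hn).
    destruct n as [|n]; simpl in Hn; destruct (e x) as [[[w x']|y]|b']; try congruence.
    destruct (approx n x') as [b0|] eqn:E; simpl in Hn; [|discriminate].
    injection Hn as <-. simpl. now rewrite (glue_settled _ _ _ E).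
  - pose proof (unsettled_coalg_spec (exist _ x ng)) as E. cbn [proj1_sig] in E. rewrite E.
    rewrite <- Fmap_comp. transitivity (t (exist _ x ng)); [exact (glue_unsettled (exist _ x ng))|].
    rewrite Ht. f_equal. apply Fmap_ext. intros z. symmetry. apply glue_unsettled.
Qed.

Lemma glue_unique s :
  (forall x, s x = match e x with inl u => a (Fmap L s u) | inr b => b end) ->
  forall x, s x = glue x.
Proof.
  intros Hs.
  assert (s_settled : forall n x b, approx n x = Some b -> s x = b).
  { induction n as [|n IH]; intros x b Hn; simpl in Hn; rewrite Hs;
      destruct (e x) as [[[w x']|y]|b']; try congruence.
    destruct (approx n x') as [b0|] eqn:E; simpl in Hn; [|discriminate].
    simpl. rewrite (IH _ _ E). congruence. }
  intros x. destruct (classic (settled x)) as [[b [n Hn]]|ng].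
  - rewrite (glue_settled _ _ _ Hn). exact (s_settled _ _ _ Hn).
  - assert (s_restricted : forall z, s (proj1_sig z) = t z).
    { apply Ht_unique. intros z. rewrite Hs, unsettled_coalg_spec, <- Fmap_comp. reflexivity. }
    transitivity (t (exist _ x ng)); [exact (s_restricted (exist _ x ng))|].
    symmetry. exact (glue_unsettled (exist _ x ng)).
Qed.

End LinearCia.

Lemma lin_functor_cia W Y : cia_functor (lin_functor W Y).
Proof.
  intros A a Hcor X e.
  destruct (Hcor _ (unsettled_coalg W Y A X a e)) as [t [Ht Htu]].
  exists (glue W Y A X a e t). split.
  - apply glue_solves; auto.
  - intros s Hs. apply glue_unique; auto.
Qed.

Lemma nat_iso_inverse_natural (H K : SetFunctor) (phi : forall X, H X -> K X)
    (psi : forall X, K X -> H X) :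
  (forall X u, psi X (phi X u) = u) -> (forall X v, phi X (psi X v) = v) ->
  (forall X Y (f : X -> Y) u, phi Y (Fmap H f u) = Fmap K f (phi X u)) ->
  forall X Y (f : X -> Y) v, psi Y (Fmap K f v) = Fmap H f (psi X v).
Proof. intros H1 H2 H3 X Y f v. rewrite <- (H2 X v) at 1. rewrite <- H3. apply H1. Qed.

Lemma unique_fun_iff {X A} (P Q : (X -> A) -> Prop) :
  (forall s, P s <-> Q s) -> unique_fun P -> unique_fun Q.
Proof. intros E [s [Ps U]]. exists s. split; [now apply E|]. intros s' Qs'. now apply U, E. Qed.

Lemma cia_transport H K : nat_iso H K -> cia_functor K -> cia_functor H.
Proof.
  intros [phi [psi [H1 [H2 H3]]]] Hc A a Hcor.
  pose proof (nat_iso_inverse_natural H K phi psi H1 H2 H3) as Hn.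
  assert (Hcor' : corecursive K A (fun k => a (psi A k))).
  { intros X e. apply (unique_fun_iff (fun s => forall x, s x = a (Fmap H s (psi X (e x))))).
    - intros s. split; intros Hs x; now rewrite Hs, Hn.
    - apply Hcor. }
  intros X e.
  apply (unique_fun_iff (fun s => forall x, s x =
      match (match e x with inl u => inl (phi X u) | inr b => inr b end) with
      | inl k => a (psi A (Fmap K s k)) | inr b => b end)).
  - intros s. split; intros Hs x; rewrite Hs; destruct (e x); auto; now rewrite <- H3, H1.
  - apply (Hc A _ Hcor').
Qed.

Lemma dichotomy_transport H K : nat_iso H K -> dichotomy K -> dichotomy H.
Proof.
  intros [phi [psi [H1 [H2 H3]]]] Hd X u x0.
  pose proof (nat_iso_inverse_natural H K phi psi H1 H2 H3) as Hn.
  assert (back : forall P : X -> Prop, lies_in K P (phi X u) -> lies_in H P u).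
  { intros P [v Hv]. exists (psi _ v). rewrite <- Hn, <- (H1 X u). now f_equal. }
  destruct (Hd X (phi X u) x0); [left|right]; auto.
Qed.

(* Only the coproduct [X = {x0} + (X - {x0})] is needed. *)
Lemma dichotomy_of_preserves_countable_coproducts H0 :
  preserves_countable_coproducts H0 -> dichotomy H0.
Proof.
  intros Hp X u x0.
  set (D := fun b : bool => {x : X | if b then x = x0 else x <> x0}).
  set (split_x0 := fun x : X => match excluded_middle_informative (x = x0) with
                   | left e => existT D true (exist _ x e)
                   | right ne => existT D false (exist _ x ne) end).
  assert (Hu : u = Fmap H0 (fun p : {b & D b} => proj1_sig (projT2 p)) (Fmap H0 split_x0 u)).
  { rewrite <- Fmap_comp, <- (Fmap_id H0 _ u) at 1. apply Fmap_ext.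
    intros x. unfold split_x0. now destruct excluded_middle_informative. }
  assert (Hbool : exists f : bool -> nat, injective f).
  { exists (fun b : bool => if b then 1 else 0). intros [] [] E; simpl in E; congruence. }
  destruct (proj2 (Hp bool D Hbool) (Fmap H0 split_x0 u)) as [[[|] v] Hv];
    simpl in Hv; rewrite <- Hv, <- Fmap_comp in Hu; [right|left]; now exists v.
Qed.

Lemma dichotomy_sum_const H0 Y : dichotomy H0 -> dichotomy (sum_const_functor H0 Y).
Proof.
  intros Hd X [h|y] x0.
  - destruct (Hd X h x0) as [[v Hv]|[v Hv]]; [left|right]; exists (inl v); simpl; now rewrite Hv.
  - left. now exists (inr y).
Qed.

Definition prod_functor (W : Type) : SetFunctor.
Proof.
  refine {| Fobj := fun X => (W * X)%type;
            Fmap := fun X Z f u => (fst u, f (snd u)) |}.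
  - intros X [w x]; reflexivity.
  - intros X Z V f g [w x]; reflexivity.
Defined.

Lemma prod_functor_preserves_countable_coproducts W :
  preserves_countable_coproducts (prod_functor W).
Proof.
  intros I X _. split.
  - intros [i [w x]] [j [w' x']] E.
    set (g := fun q : W * {i : I & X i} =>
                existT (fun i => (W * X i)%type) (projT1 (snd q)) (fst q, projT2 (snd q))).
    exact (f_equal g E).
  - intros [w [i x]]. now exists (existT (fun i => prod_functor W (X i)) i (w, x)).
Qed.

Lemma nat_iso_trans H K L : nat_iso H K -> nat_iso K L -> nat_iso H L.
Proof.
  intros [p1 [q1 [a1 [b1 c1]]]] [p2 [q2 [a2 [b2 c2]]]].
  exists (fun X u => p2 X (p1 X u)), (fun X v => q1 X (q2 X v)). repeat split; intros.
  - now rewrite a2, a1.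
  - now rewrite b1, b2.
  - now rewrite c1, c2.
Qed.

Lemma lin_functor_iso_sum_const W Y :
  nat_iso (lin_functor W Y) (sum_const_functor (prod_functor W) Y).
Proof.
  exists (fun X u => u), (fun X u => u). repeat split.
  intros X Z f [[w x]|y]; reflexivity.
Qed.

Theorem mainTheorem11 (H : SetFunctor) :
  standard H -> finitary H ->
  (cia_functor H <->
   (exists (H0 : SetFunctor) (Y : Type),
       preserves_countable_coproducts H0 /\ nat_iso H (sum_const_functor H0 Y))) /\
  ((exists (H0 : SetFunctor) (Y : Type),
       preserves_countable_coproducts H0 /\ nat_iso H (sum_const_functor H0 Y)) <->
   (exists W Y : Type, nat_iso H (lin_functor W Y))).
Proof.
  intros Hst Hfin.
  assert (linear_sum : (exists W Y : Type, nat_iso H (lin_functor W Y)) ->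
    exists (H0 : SetFunctor) (Y : Type),
      preserves_countable_coproducts H0 /\ nat_iso H (sum_const_functor H0 Y)).
  { intros [W [Y Hiso]]. exists (prod_functor W), Y. split.
    - apply prod_functor_preserves_countable_coproducts.
    - eapply nat_iso_trans; [exact Hiso|apply lin_functor_iso_sum_const]. }
  assert (sum_linear : (exists (H0 : SetFunctor) (Y : Type),
      preserves_countable_coproducts H0 /\ nat_iso H (sum_const_functor H0 Y)) ->
    exists W Y : Type, nat_iso H (lin_functor W Y)).
  { intros [H0 [Y [Hp Hiso]]]. apply linear_of_dichotomy; auto.
    eapply dichotomy_transport; [exact Hiso|].
    apply dichotomy_sum_const, dichotomy_of_preserves_countable_coproducts, Hp. }
  split; split; auto.
  - intros Hcia. apply linear_sum, linear_of_dichotomy, cia_dichotomy; auto.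
  - intros Hsum. destruct (sum_linear Hsum) as [W [Y Hiso]].
    eapply cia_transport; [exact Hiso|apply lin_functor_cia].
Qed.
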